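(* Let $f$ be a perfect $2$-coloring of $H(n,q)$ with quotient matrix $\begin{pmatrix} a & b\\ c& d\end{pmatrix}$. If there exists a $1$-perfect code in $H(q+1,q)$, then there exists a perfect $2q$-coloring of $H(qn,q)$ with quotient matrix $T=(t_{i,j})_{i,j=1}^{2q}$, where $t_{i,j}=a$ for $i,j\le q$, $t_{i,j}=b$ for $i\le q<j$, $t_{i,j}=c$ for $j\le q<i$, and $t_{i,j}=d$ for $i,j>q$.
   Context: The Hamming graph $H(n,q)$ has vertex set $\mathbb{Z}_q^n$, two vertices adjacent iff they differ in exactly one coordinate. A perfect $k$-coloring is a surjective map from the vertex set onto $\{1,\dots,k\}$ such that every vertex of color $i$ has exactly $s_{i,j}$ neighbours of color $j$ (depending only on $i,j$); $(s_{i,j})$ is its quotient matrix. A $1$-perfect code in $H(n,q)$ is a set $C$ of vertices such that every radius-$1$ Hamming ball contains exactly one element of $C$. *)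

From mathcomp Require Import all_boot.
Set Implicit Arguments. Unset Strict Implicit. Unset Printing Implicit Defensive.

Definition hvert (n q : nat) := {ffun 'I_n -> 'I_q}.

Definition hdist (n q : nat) (x y : hvert n q) : nat := #|[set i | x i != y i]|.

Definition hadj (n q : nat) (x y : hvert n q) : bool := hdist x y == 1.

Definition perfect_coloring (n q k : nat) (f : hvert n q -> 'I_k)
  (S : 'I_k -> 'I_k -> nat) : Prop :=
  (forall j : 'I_k, exists x, f x = j) /\
  (forall (x : hvert n q) (j : 'I_k), #|[set y | hadj x y & f y == j]| = S (f x) j).

Definition perfect_code (n q : nat) (C : {set hvert n q}) : Prop :=
  forall x : hvert n q, #|[set y in C | hdist x y <= 1]| = 1.

From mathcomp Require Import all_boot all_algebra zify.
Set Implicit Arguments. Unset Strict Implicit. Unset Printing Implicit Defensive.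
Import GRing.Theory.

(* A 1-perfect code C of H(q+1,q) meets every 2-dimensional face in exactly one word. Hence
   every x in H(q,q) has a unique label (k,t) in Z_q^2 such that x, with k subtracted from its
   first coordinate and t appended, lies in C. Adjacent words get different k, and for every u
   other than the k of x, the pairs (u,t) label the neighbours of x bijectively. Cut a word X of
   H(qn,q) into n blocks of length q, let P(X) in H(n,q) collect the k-labels of the blocks and
   w(X) be the sum of their t-labels in Z_q. Then X |-> (f(P(X)), w(X)) is the required perfect
   coloring: through P, the neighbours of X with second color s correspond bijectively to the
   neighbours of P(X), the t-label of the changed block being forced by s. *)

Section Hamming.
Variables n q : nat.
Implicit Types x y z : hvert n q.

Definition set_at x (l : 'I_n) (v : 'I_q) : hvert n q :=
  [ffun l' => if l' == l then v else x l'].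

Lemma set_atE x l v l' : set_at x l v l' = if l' == l then v else x l'.
Proof. by rewrite ffunE. Qed.

Lemma hdist_sym x y : hdist x y = hdist y x.
Proof. by apply: eq_card => l; rewrite !inE eq_sym. Qed.

Lemma hdist_eq0 x y : (hdist x y == 0) = (x == y).
Proof.
rewrite cards_eq0; apply/eqP/eqP => [xy|->]; last by apply/setP => l; rewrite !inE eqxx.
apply/ffunP => l; apply/eqP; have : l \notin [set l | x l != y l] by rewrite xy inE.
by rewrite inE negbK.
Qed.

Lemma hdist_leq_card x y (A : {set 'I_n}) :
  (forall l, l \notin A -> x l = y l) -> hdist x y <= #|A|.
Proof.
move=> xy; apply: subset_leq_card; apply/subsetP => l; rewrite inE.
by apply: contraR => /xy ->.
Qed.

Lemma hdist_le1 x y l : (forall l', l' != l -> x l' = y l') -> hdist x y <= 1.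
Proof. by move=> xy; rewrite -(cards1 l); apply: hdist_leq_card => l'; rewrite inE; apply: xy. Qed.

Lemma hdist_triangle x y z : hdist x z <= hdist x y + hdist y z.
Proof.
rewrite /hdist; apply: leq_trans (leq_card_setU _ _).1; apply: subset_leq_card.
apply/subsetP => l; rewrite !inE => xz.
by case: (eqVneq (x l) (y l)) => [xy|//]; rewrite -xy xz orbT.
Qed.

Lemma hdist_set_at x l v : hdist x (set_at x l v) = (x l != v).
Proof.
rewrite /hdist (cardsD1 l) inE set_atE eqxx -[RHS]addn0; congr (_ + _).
apply/eqP; rewrite cards_eq0; apply/eqP/setP => l'; rewrite !inE set_atE.
by case: eqVneq => //=; rewrite eqxx.
Qed.

Lemma hadj_set_at x l v : hadj x (set_at x l v) = (x l != v).
Proof. by rewrite /hadj hdist_set_at; case: (_ != _). Qed.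

Lemma hadjP x y :
  reflect (exists2 l, x l != y l & forall l', l' != l -> x l' = y l') (hadj x y).
Proof.
apply: (iffP idP) => [/cards1P [l Dl]|[l xyl xy]].
  have mem l' : (x l' != y l') = (l' == l) by move/setP/(_ l'): Dl; rewrite !inE.
  exists l => [|l' l'l]; first by rewrite mem.
  by apply/eqP; move: (mem l'); rewrite (negbTE l'l) => /negbFE.
apply/cards1P; exists l; apply/setP => l'; rewrite !inE.
by case: (eqVneq l' l) => [->|/xy ->]; rewrite ?eqxx.
Qed.

End Hamming.

Section PerfectCode.
Variables n q : nat.
Variable C : {set hvert n q}.
Hypothesis C_perfect : perfect_code C.

Lemma perfect_code_cover w : exists2 c, c \in C & hdist w c <= 1.
Proof.
have /eqP/cards1P [c Dc] := C_perfect w.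
have : c \in [set y in C | hdist w y <= 1] by rewrite Dc set11.
by rewrite inE => /andP [Cc wc]; exists c.
Qed.

(* Two codewords at distance at most 2 have a common neighbour, whose ball then contains both. *)
Lemma perfect_code_sep c c' : c \in C -> c' \in C -> hdist c c' <= 2 -> c = c'.
Proof.
move=> Cc Cc' cc'; case: (eqVneq c c') => // /negbTE ne.
have /card_gt0P [i] : 0 < hdist c c' by rewrite lt0n hdist_eq0 ne.
rewrite inE => cc'i.
pose w := set_at c i (c' i).
have cw : hdist w c <= 1 by rewrite hdist_sym hdist_set_at leq_b1.
have wc' : hdist w c' <= 1.
  rewrite /hdist (leq_trans (subset_leq_card (_ : _ \subset [set l | c l != c' l] :\ i))) //.
    apply/subsetP => l; rewrite !inE set_atE.
    by case: (eqVneq l i) => [->|li]; rewrite ?eqxx ?li.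
  by move: cc'; rewrite /hdist (cardsD1 i) inE cc'i.
have /eqP/cards1P [z Dz] := C_perfect w.
have : c \in [set y in C | hdist w y <= 1] by rewrite inE Cc cw.
have : c' \in [set y in C | hdist w y <= 1] by rewrite inE Cc' wc'.
by rewrite Dz !inE => /eqP -> /eqP ->.
Qed.

End PerfectCode.

Section Face.
Variables (q : nat) (C : {set hvert q.+1 q}) (w : hvert q.+1 q) (i j : 'I_q.+1).
Hypotheses (C_perfect : perfect_code C) (ij : i != j).

Definition face_word (ab : 'I_q * 'I_q) : hvert q.+1 q := set_at (set_at w i ab.1) j ab.2.

Lemma face_word_off ab l : l != i -> l != j -> face_word ab l = w l.
Proof. by move=> li lj; rewrite !set_atE (negbTE li) (negbTE lj). Qed.

Lemma face_word_i ab : face_word ab i = ab.1.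
Proof. by rewrite !set_atE eqxx (negbTE ij). Qed.

Lemma face_word_j ab : face_word ab j = ab.2.
Proof. by rewrite set_atE eqxx. Qed.

Lemma face_escape_inj (psi : 'I_q * 'I_q -> 'I_q.+1 * 'I_q) :
  (forall ab, [&& (psi ab).1 != i, (psi ab).1 != j &
                  set_at (face_word ab) (psi ab).1 (psi ab).2 \in C]) ->
  injective psi.
Proof.
move=> psiP ab ab' E; have /and3P [li lj C1] := psiP ab; have /and3P [_ _ C2] := psiP ab'.
rewrite E in li lj C1; set l := (psi ab').1 in li lj C1 C2 *; set v := (psi ab').2 in C1 C2.
have Ec : set_at (face_word ab) l v = set_at (face_word ab') l v.
  apply: (perfect_code_sep C_perfect C1 C2).
  apply: leq_trans (hdist_leq_card (A := [set i; j]) _) _; last by rewrite cards2 ij.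
  move=> l'; rewrite !inE negb_or => /andP [l'i l'j].
  by rewrite !(set_atE (face_word _)); case: ifP; rewrite // !face_word_off.
have := congr1 (fun c : hvert q.+1 q => c i) Ec.
have := congr1 (fun c : hvert q.+1 q => c j) Ec.
rewrite /= !(set_atE (face_word _)) ![_ == l]eq_sym (negbTE li) (negbTE lj).
rewrite !face_word_i !face_word_j.
by case: ab ab' {E Ec C1 C2 li lj l v} => [a b] [a' b'] /= -> ->.
Qed.

Hypothesis face_missed :
  forall c, c \in C -> (forall l, l != i -> l != j -> c l = w l) -> False.

(* The codeword covering a face word lies off the face, so it differs from that word in a
   single coordinate, other than i and j. *)
Lemma face_escape ab : exists lv : 'I_q.+1 * 'I_q,
  [&& lv.1 != i, lv.1 != j & set_at (face_word ab) lv.1 lv.2 \in C].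
Proof.
have off_face c : c \in C -> (forall l, l != i -> l != j -> c l = face_word ab l) -> False.
  by move=> Cc cw; apply: (face_missed Cc) => l li lj; rewrite cw ?face_word_off.
have [c Cc] := perfect_code_cover C_perfect (face_word ab).
rewrite leq_eqVlt ltnS leqn0 hdist_eq0 => /orP [/hadjP [l _ cl]|/eqP cw]; last first.
  by case: (off_face c Cc) => l _ _; rewrite cw.
have cE : c = set_at (face_word ab) l (c l).
  by apply/ffunP => l'; rewrite set_atE; case: eqVneq => [->|/cl ->].
exists (l, c l); rewrite /= -cE Cc andbT.
by apply/andP; split; apply/negP => /eqP ll; case: (off_face c Cc) => l' l'i l'j;
  apply/esym/cl; rewrite ll.
Qed.

(* The escaping coordinate and its value inject the q^2 face words into (q-1)q pairs. *)
Lemma face_missed_false : False.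
Proof.
have [psi psiP] := fin_all_exists face_escape.
have q_gt0 : 0 < q by apply: leq_ltn_trans (ltn_ord (w i)).
have off_ij : #|~: [set i; j]| = q.-1.
  by have := cardsC [set i; j]; rewrite cards2 ij card_ord; lia.
have psi_off : psi @: setT \subset setX (~: [set i; j]) [set: 'I_q].
  apply/subsetP => _ /imsetP [ab _ ->]; have /and3P [li lj _] := psiP ab.
  by rewrite !inE negb_or li lj.
have := subset_leq_card psi_off.
by rewrite (card_imset _ (face_escape_inj psiP)) cardsX off_ij !cardsT card_prod card_ord; nia.
Qed.

End Face.

Lemma perfect_code_face q (C : {set hvert q.+1 q}) (w : hvert q.+1 q) i j :
  perfect_code C -> i != j ->
  exists2 c, c \in C & forall l, l != i -> l != j -> c l = w l.
Proof.
move=> C_perfect ij.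
case: (pickP [pred c | (c \in C) &&
    [forall l, (l != i) ==> (l != j) ==> (c l == w l)]]) => [c /andP [Cc /forallP cw]|no_face].
  by exists c => // l li lj; apply/eqP; move: (cw l); rewrite li lj.
exfalso; apply: (face_missed_false C_perfect ij) => c Cc cw.
move: (no_face c); rewrite /= Cc /=.
by move/negbT/negP; apply; apply/forallP => l; apply/implyP => li; apply/implyP => lj; rewrite cw.
Qed.

Section Extend.
Variables n q : nat.

Definition extend (y : hvert n q) (t : 'I_q) : hvert n.+1 q :=
  [ffun l => if unlift ord_max l is Some m then y m else t].

Lemma extend_lift y t m : extend y t (lift ord_max m) = y m.
Proof. by rewrite ffunE liftK. Qed.

Lemma extend_max y t : extend y t ord_max = t.
Proof. by rewrite ffunE unlift_none. Qed.

Lemma extend_restrict (c : hvert n.+1 q) :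
  extend [ffun m => c (lift ord_max m)] (c ord_max) = c.
Proof.
apply/ffunP => l; case: (unliftP ord_max l) => [m ->|->].
  by rewrite extend_lift ffunE.
by rewrite extend_max.
Qed.

Lemma hdist_extend y y' t t' : hdist (extend y t) (extend y' t') = hdist y y' + (t != t').
Proof.
rewrite /hdist (cardsD1 ord_max) inE !extend_max addnC; congr (_ + _).
rewrite -(card_imset [set m | y m != y' m] (@lift_inj _ ord_max)).
apply: eq_card => l; rewrite !inE.
case: (unliftP ord_max l) => [m ->|->]; last first.
  rewrite eqxx; apply/esym/imsetP => -[m _] /eqP; apply/negP; exact: neq_lift.
by rewrite mem_imset; [rewrite inE !extend_lift eq_sym neq_lift | exact: lift_inj].
Qed.

End Extend.

Section CodeLabel.
Local Open Scope ring_scope.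
Variable p : nat.
Local Notation q := p.+2.
Implicit Types x y : hvert q q.

Definition shift0 x (k : 'I_q) : hvert q q := set_at x ord0 (x ord0 - k).

Lemma shift0K x k : shift0 (shift0 x (- k)) k = x.
Proof.
apply/ffunP => m; rewrite /shift0 !set_atE; case: eqVneq => [->|//].
by rewrite eqxx opprK addrK.
Qed.

Lemma hdist_shift0 x y k : hdist (shift0 x k) (shift0 y k) = hdist x y.
Proof.
apply: eq_card => m; rewrite !inE /shift0 !set_atE.
by case: (eqVneq m ord0) => [->|//]; rewrite (inj_eq (addIr _)).
Qed.

(* Words differing only in coordinate 0 lie in a common face; the shift by k there is what
   gives them different labels. *)
Definition embed x k t : hvert q.+1 q := extend (shift0 x k) t.
Definition unembed (c : hvert q.+1 q) k : hvert q q := shift0 [ffun m => c (lift ord_max m)] (- k).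

Lemma embedK c k : embed (unembed c k) k (c ord_max) = c.
Proof. by rewrite /embed /unembed shift0K extend_restrict. Qed.

Lemma hdist_embed x y k t t' : hdist (embed x k t) (embed y k t') = (hdist x y + (t != t'))%N.
Proof. by rewrite hdist_extend hdist_shift0. Qed.

Variable C : {set hvert q.+1 q}.
Hypothesis C_perfect : perfect_code C.

Lemma embed_code_exists x : exists kt : 'I_q * 'I_q, embed x kt.1 kt.2 \in C.
Proof.
have max_lift0 : lift ord_max ord0 != ord_max :> 'I_q.+1 by rewrite eq_sym neq_lift.
have [c Cc cx] := perfect_code_face (embed x 0 0) C_perfect max_lift0.
exists (x ord0 - c (lift ord_max ord0), c ord_max) => /=.
set k := x ord0 - _.
suff <- : unembed c k = x by rewrite embedK.
apply/ffunP => m; rewrite /unembed /shift0 set_atE !ffunE; case: eqVneq => [->|m0].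
  by rewrite /k opprK addrC subrK.
rewrite cx; first by rewrite /embed extend_lift /shift0 set_atE (negbTE m0).
  by rewrite (inj_eq lift_inj).
by rewrite eq_sym neq_lift.
Qed.

Lemma embed_code_uniq x k t k' t' :
  embed x k t \in C -> embed x k' t' \in C -> (k, t) = (k', t').
Proof.
move=> C1 C2; have E : embed x k t = embed x k' t'.
  apply: (perfect_code_sep C_perfect C1 C2); rewrite hdist_extend.
  apply: (@leq_add _ _ 1 1) (leq_b1 _); apply: (hdist_le1 (l := ord0)) => m m0.
  by rewrite /shift0 !set_atE (negbTE m0).
have := congr1 (fun c : hvert q.+1 q => c (lift ord_max ord0)) E.
have := congr1 (fun c : hvert q.+1 q => c ord_max) E.
by rewrite /embed /shift0 /= !extend_lift !extend_max !set_atE eqxx => -> /addrI/oppr_inj ->.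
Qed.

Definition code_label x : 'I_q * 'I_q := odflt (0, 0) [pick kt | embed x kt.1 kt.2 \in C].

Lemma code_label_in x : embed x (code_label x).1 (code_label x).2 \in C.
Proof.
rewrite /code_label; case: pickP => [kt //|none].
by have [kt] := embed_code_exists x; rewrite none.
Qed.

Lemma code_labelP x k t : (embed x k t \in C) = (code_label x == (k, t)).
Proof.
apply/idP/eqP => [kC|lx]; last by have := code_label_in x; rewrite lx.
by rewrite [code_label x]surjective_pairing (embed_code_uniq (code_label_in x) kC).
Qed.

Lemma embed_code_near x y k t t' : embed x k t \in C -> embed y k t' \in C ->
  (hdist x y + (t != t') <= 2)%N -> x = y /\ t = t'.
Proof.
move=> C1 C2 d2; have /eqP : embed x k t = embed y k t'.
  by apply: (perfect_code_sep C_perfect C1 C2); rewrite hdist_embed.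
by rewrite -hdist_eq0 hdist_embed addn_eq0 hdist_eq0 eqb0 negbK => /andP [/eqP -> /eqP ->].
Qed.

Lemma code_label_adj x y : hadj x y -> (code_label x).1 != (code_label y).1.
Proof.
move=> xy; apply/eqP => lxy.
have Cy : embed y (code_label x).1 (code_label y).2 \in C by rewrite lxy code_label_in.
case: (embed_code_near (code_label_in x) Cy) => [|exy _].
  by rewrite (eqP xy); case: (_ != _).
by move: xy; rewrite exy /hadj; have /eqP -> : hdist y y == 0 by rewrite hdist_eq0.
Qed.

Lemma code_label_nbr_inj x y y' :
  hadj x y -> hadj x y' -> code_label y = code_label y' -> y = y'.
Proof.
move=> xy xy' lyy'.
have Cy' : embed y' (code_label y).1 (code_label y).2 \in C by rewrite lyy' code_label_in.
case: (embed_code_near (code_label_in y) Cy') => // ; rewrite eqxx addn0.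
by apply: leq_trans (hdist_triangle y x y') _; rewrite hdist_sym (eqP xy) (eqP xy').
Qed.

Lemma code_label_nbr x u t :
  u != (code_label x).1 -> exists2 y, hadj x y & code_label y = (u, t).
Proof.
move=> ux; have [c Cc xc] := perfect_code_cover C_perfect (embed x u t).
set y := unembed c u; have cy : c = embed y u (c ord_max) by rewrite embedK.
have ly : code_label y = (u, c ord_max) by apply/eqP; rewrite -code_labelP -cy.
have xy : x != y by apply: contraNneq ux => ->; rewrite ly.
have dxy : (0 < hdist x y)%N by rewrite lt0n hdist_eq0.
move: xc; rewrite {1}cy hdist_embed; case: eqVneq => [-> /=|_ /=]; last by lia.
by rewrite addn0 => dxy1; exists y; rewrite // /hadj eqn_leq dxy1.
Qed.

End CodeLabel.

Section OrdPair.
Variables k m : nat.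

Lemma ord_pair_subproof (a : 'I_k) (b : 'I_m) : a * m + b < k * m.
Proof. by have := ltn_ord a; have := ltn_ord b; nia. Qed.

Definition ord_pair a b : 'I_(k * m) := Ordinal (ord_pair_subproof a b).

Lemma ord_hi_subproof (z : 'I_(k * m)) : z %/ m < k.
Proof. by case: m z => [|m'] z; [case: z; rewrite muln0 | rewrite ltn_divLR]. Qed.

Lemma ord_lo_subproof (z : 'I_(k * m)) : z %% m < m.
Proof. by case: m z => [|m'] z; [case: z; rewrite muln0 | rewrite ltn_pmod]. Qed.

Definition ord_hi z : 'I_k := Ordinal (ord_hi_subproof z).
Definition ord_lo z : 'I_m := Ordinal (ord_lo_subproof z).

Lemma ord_hi_pair a b : ord_hi (ord_pair a b) = a.
Proof.
have m_gt0 : 0 < m by apply: leq_ltn_trans (ltn_ord b).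
by apply: val_inj; rewrite /= divnMDl // divn_small ?addn0.
Qed.

Lemma ord_lo_pair a b : ord_lo (ord_pair a b) = b.
Proof. by apply: val_inj; rewrite /= modnMDl modn_small. Qed.

Lemma ord_pair_hi_lo z : ord_pair (ord_hi z) (ord_lo z) = z.
Proof. by apply: val_inj; rewrite /= -divn_eq. Qed.

Lemma ord_pair_eq a b z : (ord_pair a b == z) = (a == ord_hi z) && (b == ord_lo z).
Proof.
apply/eqP/andP => [<-|[/eqP -> /eqP ->]]; last exact: ord_pair_hi_lo.
by rewrite ord_hi_pair ord_lo_pair.
Qed.

Lemma ord_hi_eq0 z : (val (ord_hi z) == 0) = (z < m).
Proof.
have m_gt0 : 0 < m by apply: leq_ltn_trans (ltn_ord (ord_lo z)).
by rewrite /= -leqn0 leqNgt divn_gt0 // -ltnNge.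
Qed.

End OrdPair.

Section Blocks.
Variables m n q : nat.

(* Block i of a word of length m * n is formed by its coordinates r * n + i, r < m. *)
Definition block (X : hvert (m * n) q) (i : 'I_n) : hvert m q := [ffun r => X (ord_pair r i)].
Definition unblock (B : 'I_n -> hvert m q) : hvert (m * n) q :=
  [ffun z => B (ord_lo z) (ord_hi z)].
Definition replace_block X i y := unblock (fun i' => if i' == i then y else block X i').

Lemma block_unblock B i : block (unblock B) i = B i.
Proof. by apply/ffunP => r; rewrite !ffunE ord_lo_pair ord_hi_pair. Qed.

Lemma block_replace X i y i' : block (replace_block X i y) i' = if i' == i then y else block X i'.
Proof. exact: block_unblock. Qed.

Lemma replace_blockE X i y z :
  replace_block X i y z = if ord_lo z == i then y (ord_hi z) else X z.
Proof. by rewrite ffunE; case: ifP; rewrite // ffunE ord_pair_hi_lo. Qed.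

Lemma hadj_block X Y : hadj X Y ->
  exists i y, hadj (block X i) y /\ Y = replace_block X i y.
Proof.
move=> /hadjP [z XYz XY]; exists (ord_lo z), (block Y (ord_lo z)); split.
  apply/hadjP; exists (ord_hi z); first by rewrite !ffunE ord_pair_hi_lo.
  move=> r rz; rewrite !ffunE; apply: XY; apply: contra rz => /eqP <-.
  by rewrite ord_hi_pair.
apply/ffunP => z'; rewrite replace_blockE; case: eqP => [<-|/eqP zz'].
  by rewrite ffunE ord_pair_hi_lo.
by apply/esym/XY; apply: contra zz' => /eqP ->.
Qed.

Lemma hadj_replace X i y : hadj (block X i) y -> hadj X (replace_block X i y).
Proof.
move=> /hadjP [r Xyr Xy]; apply/hadjP; exists (ord_pair r i).
  by rewrite replace_blockE ord_lo_pair ord_hi_pair eqxx; rewrite ffunE in Xyr.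
move=> z zri; rewrite replace_blockE; case: eqP => [zi|//].
rewrite -Xy ?ffunE -?zi ?ord_pair_hi_lo //.
by apply: contra zri => /eqP zr; rewrite -zi -zr ord_pair_hi_lo.
Qed.

End Blocks.

Section Lift.
Local Open Scope ring_scope.
Variables p n k : nat.
Local Notation q := p.+2.
Variable label : hvert q q -> 'I_q * 'I_q.
Hypothesis label_adj : forall x y, hadj x y -> (label x).1 != (label y).1.
Hypothesis label_nbr :
  forall x u t, u != (label x).1 -> exists2 y, hadj x y & label y = (u, t).
Hypothesis label_nbr_inj :
  forall x y y', hadj x y -> hadj x y' -> label y = label y' -> y = y'.
Implicit Types X Y : hvert (q * n) q.

Definition lift_proj X : hvert n q := [ffun i => (label (block X i)).1].
Definition lift_weight X : 'I_q := \sum_i (label (block X i)).2.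
Definition lift_coloring (f : hvert n q -> 'I_k) X : 'I_(k * q) :=
  ord_pair (f (lift_proj X)) (lift_weight X).

Lemma lift_proj_replace X i y :
  lift_proj (replace_block X i y) = set_at (lift_proj X) i (label y).1.
Proof. by apply/ffunP => i'; rewrite set_atE !ffunE block_replace; case: ifP. Qed.

Lemma lift_weight_replace X i y :
  lift_weight (replace_block X i y) = lift_weight X - (label (block X i)).2 + (label y).2.
Proof.
rewrite /lift_weight (bigD1 i) // [in RHS](bigD1 i) //= block_replace eqxx.
rewrite [(label (block X i)).2 + _]addrC addrK [RHS]addrC; congr (_ + _).
apply: eq_bigr => i' /negbTE i'i.
by rewrite block_replace i'i.
Qed.

Lemma label_surj kt : exists x, label x = kt.
Proof.
case: kt => u t; have [w uw] : exists w, u != (label w).1.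
  pose x0 : hvert q q := [ffun=> 0].
  case: (eqVneq u (label x0).1) => [ux0|]; last by exists x0.
  have u1u : u + 1 != u by rewrite -subr_eq0 addrAC subrr add0r oner_eq0.
  have u1x0 : u + 1 != (label x0).1 by rewrite -ux0.
  have [w _ lw] := @label_nbr x0 (u + 1) 0 u1x0.
  by exists w; rewrite lw /= eq_sym.
by have [x _ lx] := @label_nbr w u t uw; exists x.
Qed.

Lemma lift_surj : (0 < n)%N -> forall z s, exists X, lift_proj X = z /\ lift_weight X = s.
Proof.
move=> n_gt0 z s; pose i0 := Ordinal n_gt0.
have [B lB] := fin_all_exists (fun i => label_surj (z i, if i == i0 then s else 0)).
exists (unblock B); split; first by apply/ffunP => i; rewrite ffunE block_unblock lB.
rewrite /lift_weight (eq_bigr (fun i => if i == i0 then s else 0)).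
  by rewrite -big_mkcond big_pred1_eq.
by move=> i _; rewrite block_unblock lB.
Qed.

Lemma lift_proj_adj X Y : hadj X Y -> hadj (lift_proj X) (lift_proj Y).
Proof.
case/hadj_block => i [y [Xy ->]]; rewrite lift_proj_replace hadj_set_at ffunE.
exact: label_adj.
Qed.

Lemma lift_nbr X z s : hadj (lift_proj X) z ->
  exists2 Y, hadj X Y & lift_proj Y = z /\ lift_weight Y = s.
Proof.
move=> /hadjP [i Xzi Xz].
have zXi : z i != (label (block X i)).1.
  by rewrite eq_sym -(ffunE (fun i => (label (block X i)).1)).
have [y Xy ly] := @label_nbr _ _ ((label (block X i)).2 + (s - lift_weight X)) zXi.
exists (replace_block X i y); first exact: hadj_replace.
rewrite lift_proj_replace lift_weight_replace ly; split.
  by apply/ffunP => i'; rewrite set_atE; case: eqVneq => [->|/Xz] //.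
by rewrite addrA subrK addrC subrK.
Qed.

Lemma lift_nbr_inj X Y Y' : hadj X Y -> hadj X Y' ->
  lift_proj Y = lift_proj Y' -> lift_weight Y = lift_weight Y' -> Y = Y'.
Proof.
case/hadj_block => i [y [Xy ->]]; case/hadj_block => i' [y' [Xy' ->]].
rewrite !lift_proj_replace !lift_weight_replace => /ffunP Pyy'.
have ii' : i' = i.
  apply/eqP; apply: contraT => i'i; have := Pyy' i; rewrite !set_atE eqxx eq_sym (negbTE i'i).
  by rewrite ffunE => ly; case/eqP: (label_adj Xy); rewrite ly.
subst i'; move/addrI => l2; have := Pyy' i; rewrite !set_atE eqxx => l1.
suff -> : y = y' by [].
by apply: label_nbr_inj Xy Xy' _; rewrite [label y]surjective_pairing l1 l2 -surjective_pairing.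
Qed.

Theorem lift_perfect_coloring (f : hvert n q -> 'I_k) (S : 'I_k -> 'I_k -> nat) :
  (0 < n)%N -> perfect_coloring f S ->
  perfect_coloring (lift_coloring f) (fun i j => S (ord_hi i) (ord_hi j)).
Proof.
move=> n_gt0 [f_onto f_nbr]; split=> [j|X j].
  have [z fz] := f_onto (ord_hi j); have [X [PX WX]] := lift_surj n_gt0 z (ord_lo j).
  by exists X; apply/eqP; rewrite ord_pair_eq PX WX fz !eqxx.
rewrite ord_hi_pair -f_nbr -(card_in_imset (f := lift_proj)); last first.
  move=> Y Y'; rewrite !inE !ord_pair_eq => /and3P [XY _ /eqP WY] /and3P [XY' _ /eqP WY'].
  by move=> PY; apply: lift_nbr_inj XY XY' PY _; rewrite WY WY'.
apply: eq_card => z; rewrite inE; apply/imsetP/andP => [[Y]|[Xz fz]].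
  by rewrite inE ord_pair_eq => /and3P [XY fY _] ->; split => //; apply: lift_proj_adj.
have [Y XY [PY WY]] := lift_nbr (ord_lo j) Xz.
by exists Y; rewrite // inE XY ord_pair_eq PY WY fz !eqxx.
Qed.

End Lift.

Lemma hvert_nontrivial n q (x y : hvert n q) : x != y -> 0 < n /\ 1 < q.
Proof.
move=> xy; have [i xyi] : exists i, x i != y i.
  case: (pickP (fun i => x i != y i)) => [i|same]; first by exists i.
  by case/eqP: xy; apply/ffunP => i; apply/eqP/negbFE/same.
split; first exact: leq_ltn_trans (ltn_ord i).
rewrite ltnNge; apply: contra xyi => q_le1; apply/eqP/ord_inj.
by have := ltn_ord (x i); have := ltn_ord (y i); lia.
Qed.

Theorem lemma8 (n q : nat) (f : hvert n q -> 'I_2) (a b c d : nat) :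
  perfect_coloring f (fun i j : 'I_2 =>
    if val i == 0 then (if val j == 0 then a else b)
    else (if val j == 0 then c else d)) ->
  (exists C : {set hvert q.+1 q}, perfect_code C) ->
  exists g : hvert (q * n) q -> 'I_(2 * q),
    perfect_coloring g (fun i j : 'I_(2 * q) =>
      if val i < q then (if val j < q then a else b)
      else (if val j < q then c else d)).
Proof.
move=> f_perfect [C C_perfect].
have [x0 fx0] := f_perfect.1 ord0; have [x1 fx1] := f_perfect.1 (@Ordinal 2 1 isT).
have [n_gt0 q_gt1] : 0 < n /\ 1 < q.
  by apply: (@hvert_nontrivial _ _ x0 x1); apply/eqP => x01; move: fx0; rewrite x01 fx1.
have [p def_q] : exists p, q = p.+2 by exists q.-2; lia.
subst q.
have [g_onto g_nbr] := lift_perfect_coloring (code_label_adj C_perfect)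
  (code_label_nbr C_perfect) (code_label_nbr_inj C_perfect) n_gt0 f_perfect.
exists (lift_coloring (code_label C) f); split=> // X j.
by rewrite g_nbr !ord_hi_eq0.
Qed.
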